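(* Let $j,j',j''\in[1\mathinner{.\,.}n]$ be such that $j,j''\in\mathsf{R}$, $j'\notin\mathsf{R}$, and $j<j'<j''$. Then $\mathrm{end}(j)\le j''+\tau-1$ and $j''-j\ge2\tau$.
   Context: $T\in[0\mathinner{.\,.}\sigma)^n$ with $2\le\sigma<n^{1/7}$; $\tau=\lfloor\mu\log_\sigma n\rfloor$ for a fixed positive constant $\mu<1/6$ with $\tau\ge1$. $\mathrm{per}(S)$ is the shortest period of $S$. $\mathsf{R}=\{i\in[1\mathinner{.\,.}n-3\tau+2]:\mathrm{per}(T[i\mathinner{.\,.}i+3\tau-2])\le\tau/3\}$. For $j\in\mathsf{R}$, $\mathrm{end}(j)=\min\{j'\ge j:j'\notin\mathsf{R}\}+3\tau-2$. *)

From Stdlib Require Import Reals.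
From mathcomp Require Import all_boot zify.
Set Implicit Arguments. Unset Strict Implicit. Unset Printing Implicit Defensive.

(* 1-based fragment T[i .. i+len-1] *)
Definition frag (T : seq nat) (i len : nat) : seq nat :=
  take len (drop i.-1 T).

Definition is_period (S : seq nat) (p : nat) : bool :=
  (0 < p) && [forall k : 'I_(size S), (k + p < size S) ==> (nth 0 S k == nth 0 S (k + p))].

Lemma is_period_exists (S : seq nat) : exists p, is_period S p.
Proof.
exists (size S).+1; apply/andP; split => //.
apply/forallP => k; apply/implyP => H; exfalso.
have H2 : size S < k + (size S).+1 by rewrite addnS ltnS leq_addl.
by have := ltn_trans H2 H; rewrite ltnn.
Qed.

Definition per (S : seq nat) : nat := ex_minn (is_period_exists S).

(* membership in R = {i in [1 .. n-3tau+2] : per(T[i .. i+3tau-2]) <= tau/3} *)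
Definition inR (T : seq nat) (n tau i : nat) : bool :=
  (1 <= i) && (i + 3 * tau <= n + 2) && (3 * per (frag T i (3 * tau - 1)) <= tau).

Lemma notR_exists (T : seq nat) (n tau j : nat) :
  exists j', (j <= j') && ~~ inR T n tau j'.
Proof.
exists (j + n + 3); apply/andP; split; first lia.
rewrite /inR negb_and; apply/orP; left; rewrite negb_and; apply/orP; right.
rewrite -ltnNge; lia.
Qed.

Definition endR (T : seq nat) (n tau j : nat) : nat :=
  ex_minn (notR_exists T n tau j) + (3 * tau - 2).

From Stdlib Require Import Reals.
From mathcomp Require Import all_boot zify.

Set Implicit Arguments.
Unset Strict Implicit.

(* If positions m-1 and j'' are both in R and j'' < m + 2 tau - 1, the two
   windows of length 3 tau - 1 overlap in at least tau >= p + q positions, where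
   p, q <= tau/3 are their periods.  Shifting back by q propagates the period p
   through the whole second window, so the window at m has period p as well and
   m would be in R.  Taking m = min{j' >= j : j' notin R}, this forces
   end(j) = m + 3 tau - 2 <= j'' + tau - 1, and j < m gives j'' - j >= 2 tau. *)

Definition periodic_on {A : Type} (t : nat -> A) (a b p : nat) : Prop :=
  forall x, a <= x -> x + p < b -> t x = t (x + p).

Lemma periodic_on_sub {A : Type} (t : nat -> A) a b a' b' p :
  periodic_on t a b p -> a <= a' -> b' <= b -> periodic_on t a' b' p.
Proof. by move=> tp aa' b'b x ax xb; apply: tp; lia. Qed.

Lemma periodic_on_glue {A : Type} (t : nat -> A) a b c d p q :
  periodic_on t a b p -> periodic_on t c d q -> 0 < q ->
  a <= c -> c + p + q <= b -> b <= d -> periodic_on t a d p.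
Proof.
move=> tp tq q_gt0 ac cpqb bd; elim/ltn_ind => x IH ax xpd.
have [xpb | bxp] := ltnP (x + p) b; first exact: tp.
have -> : x = x - q + q by lia.
rewrite addnAC -!tq; try lia.
by apply: IH; lia.
Qed.

Lemma size_frag (T : seq nat) i len :
  i.-1 + len <= size T -> size (frag T i len) = len.
Proof. by move=> fit; rewrite /frag size_take size_drop; case: ltnP; lia. Qed.

Lemma nth_frag (T : seq nat) i len k :
  k < len -> nth 0 (frag T i len) k = nth 0 T (i.-1 + k).
Proof. by move=> klen; rewrite /frag nth_take // nth_drop. Qed.

Lemma is_period_frag (T : seq nat) i len p : i.-1 + len <= size T ->
  is_period (frag T i len) p <->
  0 < p /\ periodic_on (nth 0 T) i.-1 (i.-1 + len) p.
Proof.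
move=> fit; rewrite /is_period size_frag //; split.
- case/andP=> p_gt0 /forallP per_p; split=> // x ix xpi.
  have xi_lt : x - i.-1 < len by lia.
  have xpi_lt : x - i.-1 + p < len by lia.
  move: (per_p (Ordinal xi_lt)) => /= /implyP /(_ xpi_lt) /eqP.
  by rewrite !nth_frag ?addnA ?subnKC.
- case=> p_gt0 per_p; rewrite p_gt0; apply/forallP=> k; apply/implyP=> kp.
  by rewrite !nth_frag ?addnA; try lia; apply/eqP/per_p; lia.
Qed.

Lemma per_period (S : seq nat) : is_period S (per S).
Proof. by rewrite /per; case: ex_minnP. Qed.

Lemma per_gt0 (S : seq nat) : 0 < per S.
Proof. by case/andP: (per_period S). Qed.

Lemma per_min (S : seq nat) p : is_period S p -> per S <= p.
Proof. by rewrite /per; case: ex_minnP => m _; apply. Qed.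

Lemma inR_succ_of_overlap (T : seq nat) n tau i k :
  size T = n -> inR T n tau i -> inR T n tau k -> i < k <= i + 2 * tau - 1 ->
  inR T n tau i.+1.
Proof.
rewrite /inR => sizeT /andP[/andP[i_ge1 i_fit] per_i].
move=> /andP[/andP[k_ge1 k_fit] per_k] ik.
have tau_gt0 : 0 < tau by have := per_gt0 (frag T i (3 * tau - 1)); lia.
set p := per _ in per_i; set q := per _ in per_k.
have [p_gt0 per_p] :=
  (is_period_frag (T := T) (i := i) (len := 3 * tau - 1) p ltac:(lia)).1
    (per_period _).
have [q_gt0 per_q] :=
  (is_period_frag (T := T) (i := k) (len := 3 * tau - 1) q ltac:(lia)).1
    (per_period _).
have per_p_union :=
  periodic_on_glue per_p per_q q_gt0 ltac:(lia) ltac:(lia) ltac:(lia).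
have per_p_succ : is_period (frag T i.+1 (3 * tau - 1)) p.
  apply/is_period_frag; first lia.
  by split=> //; apply: periodic_on_sub per_p_union _ _; lia.
have := per_min per_p_succ.
lia.
Qed.

Theorem lemma5p13 (mu : R) (n sigma tau : nat) (T : seq nat)
  (Hmu : Rlt 0 mu /\ Rlt mu (Rdiv 1 6))
  (HT : size T = n) (HTs : all (fun c => c < sigma) T)
  (Hsig2 : 2 <= sigma)
  (Hsign : Rlt (INR sigma) (Rpower (INR n) (Rdiv 1 7)))
  (Htau : Rle (INR tau) (Rmult mu (Rdiv (ln (INR n)) (ln (INR sigma)))) /\
          Rlt (Rmult mu (Rdiv (ln (INR n)) (ln (INR sigma)))) (Rplus (INR tau) 1))
  (Htau1 : 1 <= tau)
  (j j' j'' : nat)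
  (Hj : 1 <= j <= n) (Hj' : 1 <= j' <= n) (Hj'' : 1 <= j'' <= n)
  (HjR : inR T n tau j) (Hj''R : inR T n tau j'') (Hj'R : ~~ inR T n tau j')
  (Hlt : j < j' < j'') :
  endR T n tau j <= j'' + tau - 1 /\ 2 * tau <= j'' - j.
Proof.
rewrite /endR; case: ex_minnP => m /andP[jm notR_m] m_min.
have m_le_j' : m <= j' by apply: m_min; rewrite Hj'R; lia.
have j_lt_m : j < m by rewrite ltn_neqAle jm andbT; apply: contraNneq notR_m => <-.
have R_pred_m : inR T n tau m.-1.
  apply: contraT => notR; have := m_min m.-1; rewrite notR; lia.
have far : m + 2 * tau - 1 <= j''.
  rewrite leqNgt; apply: contra notR_m => near.
  have m_gt0 : 0 < m by lia.
  rewrite -(prednK m_gt0); apply: inR_succ_of_overlap HT R_pred_m Hj''R _; lia.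
lia.
Qed.
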